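(* For a set of reals $X$: (1) $X$ satisfies $\mathrm{Split}(C_\Omega,C_\Lambda)$ if and only if no image $f[X]$ of $X$ under a continuous function $f:X\to[\mathbb N]^\infty$ is a base for a nonprincipal ultrafilter on $\mathbb N$. (2) $X$ satisfies $\mathrm{Split}(B_\Omega,B_\Lambda)$ if and only if no image $f[X]$ of $X$ under a Borel function $f:X\to[\mathbb N]^\infty$ is a base for a nonprincipal ultrafilter on $\mathbb N$. (3) $X$ satisfies $\mathrm{Split}(C_{\mathrm T},C_{\mathrm T})$ if and only if no image of $X$ under a continuous function $f:X\to[\mathbb N]^\infty$ is a simple $P$-point base. (4) $X$ satisfies $\mathrm{Split}(B_{\mathrm T},B_{\mathrm T})$ if and only if no image of $X$ under a Borel function $f:X\to[\mathbb N]^\infty$ is a simple $P$-point base.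
   Context: A set of reals is an infinite topological space homeomorphic to a subset of $\mathbb R$. A cover of a space $X$ is a family $\mathcal U$ of subsets of $X$ with $\bigcup\mathcal U=X$ such that $X\not\subseteq U$ for every $U\in\mathcal U$. A cover $\mathcal U$ is: a large cover if every $x\in X$ lies in infinitely many members; an $\omega$-cover if every finite subset of $X$ is contained in some member; a $\tau$-cover if it is a large cover and for all $x,y\in X$ at least one of $\{U\in\mathcal U: x\in U, y\notin U\}$, $\{U\in\mathcal U: y\in U, x\notin U\}$ is finite. $B_\Lambda,B_\Omega,B_{\mathrm T}$ denote the collections of countable large covers, $\omega$-covers, $\tau$-covers of $X$ by Borel sets, and $C_\Lambda,C_\Omega,C_{\mathrm T}$ the corresponding collections of countable covers by clopen sets. For collections $\mathfrak U,\mathfrak V$ of covers, $X$ satisfies $\mathrm{Split}(\mathfrak U,\mathfrak V)$ if every $\mathcal U\in\mathfrak U$ can be partitioned into two disjoint subfamilies each of which contains a subfamily belonging to $\mathfrak V$. $[\mathbb N]^\infty$ is the set of infinite subsets of $\mathbb N$, a subspace of $P(\mathbb N)$ identified with the Cantor space $\{0,1\}^{\mathbb N}$ via characteristic functions. For $a,b\subseteq\mathbb N$, $a\subseteq^* b$ means $a\setminus b$ is finite. A family $B\subseteq[\mathbb N]^\infty$ is a base for a nonprincipal ultrafilter $U$ on $\mathbb N$ if $U=\{a\in[\mathbb N]^\infty:\exists b\in B\ (b\subseteq^* a)\}$. A simple $P$-point base is a family $B\subseteq[\mathbb N]^\infty$ which is a base for some nonprincipal ultrafilter on $\mathbb N$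 and is linearly ordered by $\subseteq^*$. *)

From HB Require Import structures.
From mathcomp Require Import all_boot all_algebra.
From mathcomp Require Import all_classical all_reals topology cantor measurable_structure.

Set Implicit Arguments.
Unset Strict Implicit.
Unset Printing Implicit Defensive.

Local Open Scope classical_set_scope.

Definition borel (T : topologicalType) : set (set T) := <<s [set O : set T | open O] >>.

Definition clopen_in (T : topologicalType) (X A : set T) : Prop :=
  A `<=` X /\ (exists O, open O /\ A = O `&` X) /\ (exists C, closed C /\ A = C `&` X).

Definition borel_in (T : topologicalType) (X A : set T) : Prop :=
  A `<=` X /\ exists B, borel B /\ A = B `&` X.

Definition is_cover (T : Type) (X : set T) (F : set (set T)) : Prop :=
  (forall U, F U -> U `<=` X) /\ \bigcup_(U in F) U = X /\ (forall U, F U -> ~ (X `<=` U)).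

Definition large_cover (T : Type) (X : set T) (F : set (set T)) : Prop :=
  is_cover X F /\ forall x, X x -> infinite_set [set U | F U /\ U x].

Definition omega_cover (T : Type) (X : set T) (F : set (set T)) : Prop :=
  is_cover X F /\ forall S, finite_set S -> S `<=` X -> exists U, F U /\ S `<=` U.

Definition tau_cover (T : Type) (X : set T) (F : set (set T)) : Prop :=
  large_cover X F /\ forall x y, X x -> X y ->
    finite_set [set U | F U /\ U x /\ ~ U y] \/ finite_set [set U | F U /\ U y /\ ~ U x].

Definition B_Lambda (T : topologicalType) (X : set T) : set (set (set T)) :=
  [set F | countable F /\ (forall U, F U -> borel_in X U) /\ large_cover X F].
Definition B_Omega (T : topologicalType) (X : set T) : set (set (set T)) :=
  [set F | countable F /\ (forall U, F U -> borel_in X U) /\ omega_cover X F].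
Definition B_Tau (T : topologicalType) (X : set T) : set (set (set T)) :=
  [set F | countable F /\ (forall U, F U -> borel_in X U) /\ tau_cover X F].
Definition C_Lambda (T : topologicalType) (X : set T) : set (set (set T)) :=
  [set F | countable F /\ (forall U, F U -> clopen_in X U) /\ large_cover X F].
Definition C_Omega (T : topologicalType) (X : set T) : set (set (set T)) :=
  [set F | countable F /\ (forall U, F U -> clopen_in X U) /\ omega_cover X F].
Definition C_Tau (T : topologicalType) (X : set T) : set (set (set T)) :=
  [set F | countable F /\ (forall U, F U -> clopen_in X U) /\ tau_cover X F].

Definition SplitCov (T : Type) (UU VV : set (set (set T))) : Prop :=
  forall F, UU F -> exists F1 F2 : set (set T),
    F1 `|` F2 = F /\ F1 `&` F2 = set0 /\
    (exists G1, G1 `<=` F1 /\ VV G1) /\ (exists G2, G2 `<=` F2 /\ VV G2).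

Definition subset_star (a b : set nat) : Prop := finite_set (a `\` b).

Definition nonprincipal_ultrafilter (U : set (set nat)) : Prop :=
  ~ U set0 /\ U setT /\
  (forall a b, U a -> a `<=` b -> U b) /\
  (forall a b, U a -> U b -> U (a `&` b)) /\
  (forall a, U a \/ U (~` a)) /\
  (forall a, finite_set a -> ~ U a).

Definition ultrafilter_base (B : set (set nat)) : Prop :=
  (forall b, B b -> infinite_set b) /\
  nonprincipal_ultrafilter [set a | infinite_set a /\ exists2 b, B b & subset_star b a].

Definition simple_P_point_base (B : set (set nat)) : Prop :=
  ultrafilter_base B /\ forall a b, B a -> B b -> subset_star a b \/ subset_star b a.

(* P(N) identified with the Cantor space via characteristic functions *)
Definition set_of_char (s : cantor_space) : set nat := [set n | s n].

Definition into_infinite (T : Type) (X : set T) (f : T -> cantor_space) : Prop :=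
  forall x, X x -> infinite_set (set_of_char (f x)).

Definition image_fam (T : Type) (X : set T) (f : T -> cantor_space) : set (set nat) :=
  [set set_of_char (f x) | x in X].

Definition borel_fun_on (T : topologicalType) (X : set T) (f : T -> cantor_space) : Prop :=
  forall B : set cantor_space, borel B -> borel_in X (X `&` f @^-1` B).

(* Code a point x of X by the set of indices n with x in e n, where e
   enumerates a countable cover F.  A set a of indices splitting every code
   partitions F into the members indexed inside and outside a, two large
   covers.  If no a splits every code, the codes form a nonprincipal
   ultrafilter base: three codes meet in an infinite set when F is an
   omega-cover, and codes are linearly ordered by almost inclusion when F is
   a tau-cover; the coding map is continuous (Borel) when the members are
   clopen (Borel).  Conversely, if f[X] is an ultrafilter base, the sets
   {x | n in f x} form an omega-cover (a tau-cover when f[X] is linearly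
   ordered), and a splitting of it into two large covers would give a set of
   indices splitting every f x, which an ultrafilter base forbids. *)

From HB Require Import structures.
From mathcomp Require Import all_boot all_algebra.
From mathcomp Require Import all_classical all_reals topology cantor measurable_structure.
From mathcomp Require Import zify.

Import numFieldTopology.Exports.
Set Implicit Arguments.
Unset Strict Implicit.
Unset Printing Implicit Defensive.
Local Open Scope classical_set_scope.

Lemma subset_star_refl (a : set nat) : subset_star a a.
Proof. by rewrite /subset_star setDv; exact: finite_set0. Qed.

Lemma subset_star_trans (a b c : set nat) :
  subset_star a b -> subset_star b c -> subset_star a c.
Proof.
move=> ab bc; have : finite_set ((a `\` b) `|` (b `\` c)) by rewrite finite_setU.
by apply: sub_finite_set => n [an nc]; case: (pselect (b n)) => bn; [right|left].
Qed.

Lemma subset_star_infinite (a b : set nat) :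
  subset_star a b -> infinite_set a -> infinite_set b.
Proof.
move=> ab ia fb; apply: ia.
have : finite_set ((a `\` b) `|` b) by rewrite finite_setU.
by apply: sub_finite_set => n an; case: (pselect (b n)) => bn; [right|left].
Qed.

Lemma subset_star_setI3_infinite (w a b c : set nat) : infinite_set w ->
  subset_star w a -> subset_star w b -> subset_star w c -> infinite_set (a `&` b `&` c).
Proof.
move=> iw wa wb wc; apply: (subset_star_infinite _ iw).
have : finite_set ((w `\` a) `|` (w `\` b) `|` (w `\` c)) by rewrite !finite_setU.
apply: sub_finite_set => n [wn nabc].
case: (pselect (a n)) => an; last by left; left.
case: (pselect (b n)) => bn; last by left; right.
by right; split => // cn; apply: nabc.
Qed.

Definition subset_star_total (a b : set nat) := subset_star a b \/ subset_star b a.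

Lemma subset_star_total_setI3_infinite (a b c : set nat) :
  infinite_set a -> infinite_set b -> infinite_set c ->
  subset_star_total a b -> subset_star_total a c -> subset_star_total b c ->
  infinite_set (a `&` b `&` c).
Proof.
move=> ia ib ic [ab|ba] ac bc; have r := subset_star_refl.
  case: ac => [ac|ca]; first exact: subset_star_setI3_infinite ia (r a) ab ac.
  exact: subset_star_setI3_infinite ic ca (subset_star_trans ca ab) (r c).
case: bc => [bc|cb]; first exact: subset_star_setI3_infinite ib ba (r b) bc.
exact: subset_star_setI3_infinite ic (subset_star_trans cb ba) cb (r c).
Qed.

Lemma infinite_image_inj (U : Type) (e : nat -> U) (A : set nat) :
  injective e -> infinite_set A -> infinite_set (e @` A).
Proof.
move=> ie iA fi; apply: iA.
by have /eq_finite_set <- := @inj_card_eq _ _ A e (in2W ie).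
Qed.

Definition splits (a b : set nat) : Prop :=
  infinite_set (b `&` a) /\ infinite_set (b `\` a).

Lemma infinite_set_split (Z : set nat) : infinite_set Z -> exists a, splits a Z.
Proof.
move=> /infiniteP /pcard_leP /injfunPex [h hZ hinj].
have {}hinj : injective h by move=> m n /(hinj m n (mem_set I) (mem_set I)).
have even_inj : injective (fun k => h k.*2) by move=> m n /hinj; lia.
have odd_inj : injective (fun k => h k.*2.+1) by move=> m n /hinj; lia.
exists (range (fun k => h k.*2)); split.
  apply: sub_infinite_set (infinite_image_inj even_inj infinite_nat).
  by move=> _ [k _ <-]; split; [exact: hZ|exists k].
apply: sub_infinite_set (infinite_image_inj odd_inj infinite_nat).
move=> _ [k _ <-]; split; first exact: hZ.
by move=> [j _ /hinj] /(congr1 odd); rewrite /= !odd_double.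
Qed.

Lemma splitsS (a b c : set nat) : b `<=` c -> splits a b -> splits a c.
Proof.
move=> bc [iba ib_a]; split.
  by apply: sub_infinite_set iba => n [/bc].
by apply: sub_infinite_set ib_a => n [/bc].
Qed.

Lemma splitsN (a b : set nat) :
  ~ splits a b -> subset_star b a \/ subset_star b (~` a).
Proof.
move=> /not_andP [/contrapT fin|/contrapT fin]; [right|left] => //.
by apply: sub_finite_set fin => n [bn /contrapT].
Qed.

Lemma splits_subset_star (a b : set nat) :
  splits a b -> ~ (subset_star b a \/ subset_star b (~` a)).
Proof.
move=> [iba ib_a] [fb|fb]; first exact: ib_a.
by apply: iba; apply: sub_finite_set fb => n [bn an]; split.
Qed.

Definition star_filter (B : set (set nat)) : set (set nat) :=
  [set a | infinite_set a /\ exists2 b, B b & subset_star b a].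

Section UltrafilterBase.
Variables (T : Type) (X : set T) (g : T -> set nat).

Lemma star_filter_image x a : X x -> infinite_set (g x) -> subset_star (g x) a ->
  star_filter (g @` X) a.
Proof.
move=> Xx igx gxa; split; first exact: subset_star_infinite gxa igx.
by exists (g x) => //; exists x.
Qed.

Lemma unsplit_ultrafilter_base : X !=set0 ->
  (forall x, X x -> infinite_set (g x)) ->
  (forall x y z, X x -> X y -> X z -> infinite_set (g x `&` g y `&` g z)) ->
  (forall a, exists2 x, X x & ~ splits a (g x)) ->
  ultrafilter_base (g @` X).
Proof.
move=> [x0 Xx0] ginf gI3 unsplit.
have gxS x a : X x -> subset_star (g x) a -> star_filter (g @` X) a.
  by move=> Xx; apply: star_filter_image Xx (ginf x Xx).
split; first by move=> _ [x Xx <-]; exact: ginf.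
split; first by case=> /(_ (finite_set0 _)).
split; first by apply: (gxS x0) => //; rewrite /subset_star setDT; exact: finite_set0.
split.
  move=> a b [_ [_ [x Xx <-] gxa]] ab; apply: (gxS x) => //.
  by apply: sub_finite_set gxa => n [? /= nb]; split => // /ab.
split.
  move=> a1 a2 [_ [_ [x Xx <-] s1]] [_ [_ [y Xy <-] s2]].
  have [z Xz /splitsN [sz|sz]] := unsplit (a1 `&` a2); first exact: (gxS z).
  exfalso; apply: (gI3 x y z Xx Xy Xz).
  have : finite_set ((g x `\` a1) `|` (g y `\` a2) `|` (g z `\` ~` (a1 `&` a2))).
    by rewrite !finite_setU.
  apply: sub_finite_set => n [[gxn gyn] gzn].
  case: (pselect (a1 n)) => a1n; last by left; left.
  case: (pselect (a2 n)) => a2n; last by left; right.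
  by right; split => // /(_ (conj a1n a2n)).
split; last by move=> a fa [].
by move=> a; have [z Xz /splitsN [sz|sz]] := unsplit a; [left|right]; exact: (gxS z).
Qed.

Lemma ultrafilter_base_unsplit : ultrafilter_base (g @` X) ->
  forall a, exists2 x, X x & ~ splits a (g x).
Proof.
move=> [_ [_ [_ [_ [_ [Ucompl _]]]]]] a.
by case: (Ucompl a) => -[_ [_ [x Xx <-] gx]]; exists x => //;
  move/splits_subset_star; apply; [left|right].
Qed.

End UltrafilterBase.

Section Covers.
Variables (T : Type) (X : set T).

Lemma omega_cover_infinite (F : set (set T)) (S : set T) : X !=set0 ->
  omega_cover X F -> finite_set S -> S `<=` X ->
  infinite_set [set U | F U /\ S `<=` U].
Proof.
move=> [x0 Xx0] [[FX [_ FnX]] om] fS SX fFS.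
(* pick a point of X outside each member containing S: a member containing S
   and all these points would have to miss its own point *)
have /choice [out outP] : forall U : set T, exists y,
    [set U | F U /\ S `<=` U] U -> X y /\ ~ U y.
  move=> U; case: (pselect ([set U | F U /\ S `<=` U] U)) => [[FU _]|nU].
    by have /existsNP [y /not_implyP] := FnX U FU; exists y.
  by exists x0.
have [V [FV SV]] : exists V, F V /\ S `|` out @` [set U | F U /\ S `<=` U] `<=` V.
  apply: om; first by rewrite finite_setU; split => //; exact: finite_image.
  by move=> t [/SX //|[U HU <-]]; case: (outP U HU).
have HV : [set U | F U /\ S `<=` U] V by split => // t St; apply: SV; left.
by case: (outP V HV) => _; apply; apply: SV; right; exists V.
Qed.

Lemma omega_cover_large (F : set (set T)) : X !=set0 ->
  omega_cover X F -> large_cover X F.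
Proof.
move=> X0 omF; split; first exact: omF.1.
move=> x Xx; have x1X : [set x] `<=` X by move=> _ ->.
have := omega_cover_infinite X0 omF (finite_set1 x) x1X.
by apply: contra_not; apply: sub_finite_set => U [FU /(_ x erefl)].
Qed.

Lemma large_cover_sub_tau (F G : set (set T)) :
  G `<=` F -> tau_cover X F -> large_cover X G -> tau_cover X G.
Proof.
move=> GF [_ tF] lG; split => // x y Xx Xy.
by case: (tF x y Xx Xy) => h; [left|right]; apply: sub_finite_set h => U [/GF].
Qed.

Lemma large_cover_infinite (F : set (set T)) : X !=set0 -> large_cover X F ->
  infinite_set F.
Proof.
move=> [x Xx] [_ Flarge]; have := Flarge x Xx.
by apply: contra_not; apply: sub_finite_set => U [].
Qed.

Lemma large_cover_indices_infinite (e : nat -> set T) : large_cover X (range e) ->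
  forall x, X x -> infinite_set [set n | e n x].
Proof.
move=> [_ elarge] x Xx; have := elarge x Xx; apply: contra_not => fin.
apply: sub_finite_set (finite_image e fin) => U [[n _ <-] enx].
by exists n.
Qed.

Lemma omega_cover_indices_setI3_infinite (e : nat -> set T) : X !=set0 ->
  omega_cover X (range e) -> forall x y z, X x -> X y -> X z ->
  infinite_set ([set n | e n x] `&` [set n | e n y] `&` [set n | e n z]).
Proof.
move=> X0 eomega x y z Xx Xy Xz.
have xyzX : [set x; y; z] `<=` X by move=> t [[->|->]|->].
have := omega_cover_infinite X0 eomega (finite_set3 x y z) xyzX.
apply: contra_not => fin; apply: sub_finite_set (finite_image e fin).
move=> U [[n _ <-] xyzU]; exists n => //.
by split; [split|]; apply: xyzU; [left; left|left; right|right].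
Qed.

Lemma tau_cover_indices_total (e : nat -> set T) : injective e ->
  tau_cover X (range e) -> forall x y, X x -> X y ->
  subset_star_total [set n | e n x] [set n | e n y].
Proof.
move=> einj [_ esep] x y Xx Xy.
have few_separating x' y' : finite_set [set U | range e U /\ U x' /\ ~ U y'] ->
    subset_star [set n | e n x'] [set n | e n y'].
  move=> fin; apply: contrapT => inf; apply: (infinite_image_inj einj inf).
  by apply: sub_finite_set fin => _ [n [enx eny] <-]; split; first exists n.
by case: (esep x y Xx Xy) => h; [left|right]; exact: few_separating.
Qed.

(* C_Omega X is cover_class (clopen_in X) (omega_cover X) by definition, and
   likewise for the other collections of covers *)
Definition cover_class (P : set T -> Prop) (K : set (set T) -> Prop) :
    set (set (set T)) :=
  [set F | countable F /\ (forall U, F U -> P U) /\ K F].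

Lemma countable_infinite_enum (F : set (set T)) : countable F -> infinite_set F ->
  exists2 e : nat -> set T, injective e & F = range e.
Proof.
move=> cF iF.
have /pcard_eqP/bijPex [e [eF einj esurj]] : ([set: nat] #= F)%card.
  by rewrite card_eq_sym; exact: eq_card_nat.
exists e; first by move=> m n /(einj m n (mem_set I) (mem_set I)).
by apply/seteqP; split => [U FU|U [n _ <-]]; [exact: esurj|exact: eF].
Qed.

End Covers.

Section SplitEnumeratedCover.
Variables (T : Type) (X : set T) (P : set T -> Prop) (e : nat -> set T).
Hypotheses (einj : injective e) (Pe : forall n, P (e n)) (cover_e : is_cover X (range e)).

Lemma large_subcover_image (S : set nat) :
  (forall x, X x -> infinite_set ([set n | e n x] `&` S)) ->
  cover_class P (large_cover X) (e @` S).
Proof.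
move=> Sinf; have eS : e @` S `<=` range e by move=> _ [n _ <-]; exists n.
have [eX [_ eXn]] := cover_e.
split; first exact: sub_countable (subset_card_le eS) (card_image_le _ _).
split; first by move=> _ [n _ <-].
split; last first.
  move=> x Xx; apply: sub_infinite_set (infinite_image_inj einj (Sinf x Xx)).
  by move=> _ [n [enx Sn] <-]; split => //; exists n.
split; first by move=> U /eS /eX.
split; last by move=> U /eS /eXn.
apply/seteqP; split => [x [U /eS /eX]|x Xx]; first exact.
have /infinite_setN0 [n [enx Sn]] := Sinf x Xx.
by exists (e n) => //; exists n.
Qed.

Lemma splits_large_subcovers (a : set nat) :
  (forall x, X x -> splits a [set n | e n x]) ->
  exists F1 F2 : set (set T), [/\ F1 `|` F2 = range e, F1 `&` F2 = set0,
    cover_class P (large_cover X) F1 & cover_class P (large_cover X) F2].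
Proof.
move=> asplits; exists (e @` a), (e @` ~` a); split.
- apply/seteqP; split; first by move=> U [] [n _ <-]; exists n.
  by move=> _ [n _ <-]; case: (pselect (a n)) => an; [left|right]; exists n.
- by apply/seteqP; split => // U [[n an <-] [m + /einj mn]]; rewrite mn.
- by apply: large_subcover_image => x /asplits [].
- by apply: large_subcover_image => x /asplits []; rewrite setDE.
Qed.

End SplitEnumeratedCover.

Section MemberCover.
Variables (T : eqType) (X : set T) (g : T -> set nat).

Definition member_set (n : nat) : set T := [set x | X x /\ g x n].

(* members equal to X are dropped, since a cover may not contain X *)
Definition member_cover : set (set T) :=
  [set V | exists n, V = member_set n /\ ~ (X `<=` V)].

Lemma member_cover_countable : countable member_cover.
Proof.
apply: sub_countable (subset_card_le (_ : member_cover `<=` range member_set)) _.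
  by move=> _ [n [-> _]]; exists n.
exact: sub_countable (card_image_le _ _) (countableP _).
Qed.

Hypothesis gbase : ultrafilter_base (g @` X).

Let ginf x : X x -> infinite_set (g x).
Proof. by move=> Xx; apply: gbase.1; exists x. Qed.

Lemma infinite_bigcap_seq (s : seq T) (sX : forall x, x \in s -> X x) :
  infinite_set [set n | forall x, x \in s -> g x n].
Proof.
have [_ [_ [Ufull [_ [UI _]]]]] := gbase.
suff Us : star_filter (g @` X) [set n | forall x, x \in s -> g x n] by case: Us.
elim: s => [|y s IH] in sX *.
  rewrite (_ : [set n | forall x, x \in [::] -> g x n] = setT) //.
  by apply/seteqP; split => // n _ x.
rewrite (_ : [set n | forall x, x \in y :: s -> g x n] =
             g y `&` [set n | forall x, x \in s -> g x n]).
  have Xy : X y by apply: sX; rewrite inE eqxx.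
  apply: UI; first exact: star_filter_image Xy (ginf Xy) (subset_star_refl _).
  by apply: IH => x xs; apply: sX; rewrite inE xs orbT.
apply/seteqP; split => n /=.
  by move=> gn; split => [|x xs]; apply: gn; rewrite inE ?eqxx ?xs ?orbT.
by move=> [gyn gsn] x; rewrite inE => /orP [/eqP ->|/gsn].
Qed.

Lemma finite_bigcap : finite_set [set n | forall x, X x -> g x n].
Proof.
apply: contrapT => /infinite_set_split [a asplits].
have [x Xx] := ultrafilter_base_unsplit gbase a; apply.
by apply: splitsS asplits => n /(_ x Xx).
Qed.

Lemma member_cover_finite_subset (S : set T) : finite_set S -> S `<=` X ->
  exists U, member_cover U /\ S `<=` U.
Proof.
move=> /finite_seqP [s ->] sX; set Z := [set n | forall x, X x -> g x n].
have Zsinf := infinite_bigcap_seq (fun x xs => sX x xs).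
set Zs := [set n | forall x, x \in s -> g x n] in Zsinf.
have /infinite_setN0 [n [gsn nZ]] : infinite_set (Zs `\` Z).
  move=> fin; apply: Zsinf.
  have : finite_set ((Zs `\` Z) `|` Z).
    by rewrite finite_setU; split; last exact: finite_bigcap.
  by apply: sub_finite_set => n sn; case: (pselect (Z n)) => ?; [right|left].
exists (member_set n); split; first by exists n; split => // Xn; apply: nZ => x /Xn [].
by move=> x xs; split; [exact: sX|exact: gsn].
Qed.

Lemma member_cover_omega : omega_cover X member_cover.
Proof.
split=> [|S]; last exact: member_cover_finite_subset.
split; first by move=> U [n [-> _]] x [].
split; last by move=> U [n [_ nXU]].
apply/seteqP; split; first by move=> x [U [n [-> _]]] [].
move=> x Xx; have x1X : [set x] `<=` X by move=> _ ->.
by have [U [FU /(_ x erefl) Ux]] := member_cover_finite_subset (finite_set1 x) x1X; exists U.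
Qed.

Lemma member_cover_tau : X !=set0 ->
  (forall x y, X x -> X y -> subset_star_total (g x) (g y)) ->
  tau_cover X member_cover.
Proof.
move=> X0 gtotal; split; first exact: omega_cover_large X0 member_cover_omega.
have few_separating x y : X y -> subset_star (g x) (g y) ->
    finite_set [set U | member_cover U /\ U x /\ ~ U y].
  move=> Xy gxy; apply: sub_finite_set (finite_image member_set gxy).
  by move=> _ [[n [-> _]] [[_ gxn] nUy]]; exists n => //; split => // gyn; apply: nUy.
by move=> x y Xx Xy; case: (gtotal x y Xx Xy) => h; [left|right]; apply: few_separating.
Qed.

Let large_subcover_indices (F G : set (set T)) : G `<=` F -> F `<=` member_cover ->
  large_cover X G -> forall x, X x -> infinite_set (g x `&` [set n | F (member_set n)]).
Proof.
move=> GF Fmem [_ Glarge] x Xx fin; apply: (Glarge x Xx).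
apply: sub_finite_set (finite_image member_set fin).
move=> U [/[dup] GU /GF /[dup] FU /Fmem [n [UE _]] Ux]; exists n => //.
by rewrite UE in FU Ux; case: Ux.
Qed.

Lemma member_cover_not_split (F1 F2 G1 G2 : set (set T)) :
  F1 `|` F2 = member_cover -> F1 `&` F2 = set0 ->
  G1 `<=` F1 -> large_cover X G1 -> G2 `<=` F2 -> large_cover X G2 -> False.
Proof.
move=> F12 F1F2 G1F1 G1large G2F2 G2large.
have F1mem : F1 `<=` member_cover by rewrite -F12 => U; left.
have F2mem : F2 `<=` member_cover by rewrite -F12 => U; right.
have [x Xx] := ultrafilter_base_unsplit gbase [set n | F1 (member_set n)]; apply.
split; first exact: large_subcover_indices G1F1 F1mem G1large x Xx.
apply: sub_infinite_set (large_subcover_indices G2F2 F2mem G2large Xx).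
move=> n [gxn F2n]; split => // F1n.
by have : (F1 `&` F2) (member_set n) by []; rewrite F1F2.
Qed.

End MemberCover.

Definition char_code (T : Type) (e : nat -> set T) (x : T) : cantor_space :=
  fun n => `[< e n x >].

Lemma set_of_char_code (T : Type) (e : nat -> set T) x :
  set_of_char (char_code e x) = [set n | e n x].
Proof. by apply/funext => n; rewrite /set_of_char /char_code /= asboolE. Qed.

Definition cylinder (s : cantor_space) (N : nat) : set cantor_space :=
  [set t | forall i, (i < N)%N -> t i = s i].

Lemma open_cylinder_subset (O : set cantor_space) s : open O -> O s ->
  exists N, cylinder s N `<=` O.
Proof.
move=> oO Os; pose F := filter_from [set: nat] (cylinder s).
have Ffilter : Filter F.
  apply: filter_from_filter; first by exists 0%N.
  move=> i j _ _; exists (maxn i j) => // t st.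
  by split => k kij; apply: st; rewrite leq_max kij ?orbT.
have Fs : F --> (s : cantor_space).
  apply/cvg_sup => i U [V] [[W] oW <-] WsI WU.
  by exists i.+1 => // t st; apply: WU; rewrite /= st.
have [N _ sub] : F O by apply: Fs; exact: open_nbhs_nbhs.
by exists N.
Qed.

Lemma open_bigcup_cylinder (O : set cantor_space) : open O ->
  exists W : nat -> set cantor_space,
    O = \bigcup_k W k /\ forall k, W k = set0 \/ exists s N, W k = cylinder s N.
Proof.
(* k codes a bit string p; keep its cylinder when it lies inside O *)
move=> oO; pose W k : set cantor_space :=
  if unpickle k is Some p then
    let c := cylinder (nth false p) (size p) in if `[< c `<=` O >] then c else set0
  else set0.
exists W; split; last first.
  move=> k; rewrite /W; case: (unpickle k) => [p|]; last by left.
  by case: asboolP => _; [right; exists (nth false p), (size p)|left].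
apply/seteqP; split => [s Os|s [k _]]; last first.
  by rewrite /W; case: (unpickle k) => // p; case: asboolP => // sub /sub.
have [N sN] := open_cylinder_subset oO Os.
have cE : cylinder (nth false (mkseq s N)) (size (mkseq s N)) = cylinder s N.
  by apply/seteqP; rewrite size_mkseq; split => t st i iN; rewrite st // nth_mkseq.
exists (pickle (mkseq s N)) => //; rewrite /W pickleK /= cE.
by case: asboolP.
Qed.

Lemma sigma_algebraT_bigcap (U : Type) (G : set (set U)) (A : nat -> set U) :
  sigma_algebra setT G -> (forall k, G (A k)) -> G (\bigcap_k A k).
Proof.
move=> [_ GC GU] GA; rewrite -[Y in G Y]setCK setC_bigcap -setTD.
by apply: (GC); apply: GU => k; rewrite -setTD; exact: GC.
Qed.

Section Coding.
Variables (T : topologicalType) (X : set T).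

Lemma char_code_continuous (e : nat -> set T) : (forall n, clopen_in X (e n)) ->
  {within X, continuous (char_code e)}.
Proof.
move=> eclopen; apply/subspace_continuousP => x Xx.
apply/cvg_sup => i U [V] [[W] oW <-] WsI WU.
have near_eq : within X (nbhs x) [set y | char_code e y i = char_code e x i].
  have [_ [[O [oO eO]] [C [cC eC]]]] := eclopen i.
  case: (pselect (e i x)) => exi.
    have Ox : O x by move: exi; rewrite eO => -[].
    apply: filterS (open_nbhs_nbhs (conj oO Ox)) => y Oy Xy.
    by rewrite /char_code /= !asboolT // eO.
  have nCx : (~` C) x by move=> Cx; apply: exi; rewrite eC.
  apply: filterS (open_nbhs_nbhs (conj (closed_openC cC) nCx)) => y nCy Xy.
  by rewrite /char_code /= !asboolF // eC => -[].
rewrite nbhs_simpl; apply: filterS near_eq => y /= h; apply: WU.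
by change (W (char_code e y i)); rewrite h.
Qed.

Lemma continuous_coord_clopen (f : T -> cantor_space) n :
  {within X, continuous f} -> clopen_in X [set x | X x /\ f x n].
Proof.
move=> fcont; pose h := (fun s : cantor_space => s n) \o (f : subspace X -> cantor_space).
have hcont : continuous h.
  move=> x; apply: continuous_comp; first exact: fcont.
  exact: (@proj_continuous nat (fun _ => bool) n).
have hopen (b : bool) : open (h @^-1` [set b]).
  by move/continuousP: hcont; apply; exact: discrete_open.
split; first by move=> x [].
split.
  have /open_subspaceP [V oV VE] := hopen true.
  exists V; split => //; rewrite VE; apply/seteqP.
  by split => x /= [? ?]; split.
have /closed_subspaceP [C cC CE] : closed (~` (h @^-1` [set false]) : set (subspace X)).
  exact: open_closedC.
exists C; split => //; rewrite CE; apply/seteqP; split => x /= [].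
  by move=> Xx fxn; split => //; rewrite /h /= fxn.
by move=> fxn Xx; split => //; move: fxn; rewrite /h /=; case: (f x n).
Qed.

Lemma borel_inE : borel_in X = strace (@borel T) X.
Proof.
apply/funext => A; apply/propext; split => [[_ [B [bB ->]]]|[B bB <-]].
  by exists B.
by split; [move=> x []|exists B].
Qed.

Lemma char_code_borel (e : nat -> set T) : (forall n, borel_in X (e n)) ->
  borel_fun_on X (char_code e).
Proof.
(* the sets with a Borel trace preimage form a sigma-algebra containing the
   coordinate sets, hence the cylinders, hence the open sets *)
rewrite borel_inE => eborel.
pose S := image_set_system X (char_code e) (strace (@borel T) X).
have traceS : sigma_algebra X (strace (@borel T) X).
  exact/sigma_algebra_strace/smallest_sigma_algebra.
have Ssigma : sigma_algebra setT S by exact: sigma_algebra_image.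
have [S0 SC SU] := Ssigma.
suff borelS : @borel cantor_space `<=` S by move=> B /borelS; rewrite borel_inE.
apply: smallest_sub => // O /open_bigcup_cylinder [W [-> Wcyl]].
apply: SU => k; case: (Wcyl k) => [->|[s [N ->]]]; first exact: S0.
have coordS i b : S [set t : cantor_space | t i = b].
  rewrite /S /image_set_system /=.
  have -> : X `&` char_code e @^-1` [set t | t i = b] = if b then e i else X `\` e i.
    have eX : e i `<=` X by have [B _ <-] := eborel i => x [].
    apply/seteqP; split => x; rewrite /char_code /=.
      by case: b => -[Xx]; case: asboolP => // exi _; split.
    case: b => [exi|[Xx nexi]]; first by split; [exact: eX|exact: asboolT].
    by split => //; exact: asboolF.
  by case: b; [exact: eborel|by case: traceS => _ + _; apply].
have -> : cylinder s N = \bigcap_i (if (i < N)%N then [set t | t i = s i] else setT).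
  apply/seteqP; split => t.
    by move=> st i _; case: ifPn => // iN; exact: st.
  by move=> st i iN; have := st i I; rewrite iN.
apply: sigma_algebraT_bigcap => // i; case: ifP => _; first exact: coordS.
by rewrite -(setD0 [set: cantor_space]); exact: SC.
Qed.

Lemma borel_fun_coord_borel (f : T -> cantor_space) n : borel_fun_on X f ->
  borel_in X [set x | X x /\ f x n].
Proof.
move=> fborel.
have coord_open : open [set s : cantor_space | s n].
  have coord_cont : continuous (fun s : cantor_space => s n).
    by move=> s; exact: (@proj_continuous nat (fun _ => bool) n).
  by move/continuousP: coord_cont => /(_ [set true]); apply; exact: discrete_open.
exact: fborel _ (sub_gen_smallest coord_open).
Qed.

End Coding.

Section SplitCharacterization.
Variables (T : eqType) (X : set T) (P : set T -> Prop).
Variable Cls : (T -> cantor_space) -> Prop.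
(* P is clopen_in X or borel_in X, and Cls the matching class of maps *)
Hypothesis X0 : X !=set0.
Hypothesis Cls_char_code : forall e, (forall n, P (e n)) -> Cls (char_code e).
Hypothesis P_coord : forall f n, Cls f -> P [set x | X x /\ f x n].

Lemma no_split_of_ultrafilter_base (K VK : set (set T) -> Prop) f :
  (forall G, VK G -> large_cover X G) -> Cls f -> ultrafilter_base (image_fam X f) ->
  K (member_cover X (set_of_char \o f)) ->
  ~ SplitCov (cover_class P K) (cover_class P VK).
Proof.
move=> VKlarge fCls fbase Kmem splitK.
have memP U : member_cover X (set_of_char \o f) U -> P U.
  by move=> [n [-> _]]; exact: P_coord.
have [F1 [F2 [F12 [F1F2 [[G1 [G1F1 [_ [_ /VKlarge G1large]]]]
    [G2 [G2F2 [_ [_ /VKlarge G2large]]]]]]]]] :=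
  splitK _ (conj (member_cover_countable X _) (conj memP Kmem)).
exact: (@member_cover_not_split _ X (set_of_char \o f) fbase) _ _ _ _
  F12 F1F2 G1F1 G1large G2F2 G2large.
Qed.

Lemma large_cover_split_or_code (F : set (set T)) :
  countable F -> (forall U, F U -> P U) -> large_cover X F ->
  (exists F1 F2 : set (set T), [/\ F1 `|` F2 = F, F1 `&` F2 = set0,
     cover_class P (large_cover X) F1 & cover_class P (large_cover X) F2])
  \/ exists2 e : nat -> set T, F = range e /\ injective e &
     Cls (char_code e) /\ forall a, exists2 x, X x & ~ splits a [set n | e n x].
Proof.
move=> cF PF Flarge.
have [e einj Fe] := countable_infinite_enum cF (large_cover_infinite X0 Flarge).
subst F; have Pe n : P (e n) by apply: PF; exists n.
have [[a asplits]|nosplitter] :=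
  pselect (exists a, forall x, X x -> splits a [set n | e n x]).
  by left; apply: splits_large_subcovers asplits => //; case: Flarge.
right; exists e => //; split; first exact: Cls_char_code.
move=> a; move/forallNP: nosplitter => /(_ a) /existsNP [x /not_implyP [Xx nsplit]].
by exists x.
Qed.

Lemma into_infinite_char_code (e : nat -> set T) :
  (forall x, X x -> infinite_set [set n | e n x]) -> into_infinite X (char_code e).
Proof. by move=> einf x; rewrite set_of_char_code; exact: einf. Qed.

Lemma image_fam_char_code (e : nat -> set T) :
  image_fam X (char_code e) = (fun x => [set n | e n x]) @` X.
Proof. by rewrite /image_fam; under eq_imagel do rewrite set_of_char_code. Qed.

Lemma omega_split_iff :
  SplitCov (cover_class P (omega_cover X)) (cover_class P (large_cover X)) <->
  ~ exists f, Cls f /\ into_infinite X f /\ ultrafilter_base (image_fam X f).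
Proof.
split=> [splitF [f [fCls [_ fbase]]]|nobase F [cF [PF Fomega]]].
  apply: (no_split_of_ultrafilter_base (f := f)) splitF => //.
  exact: (@member_cover_omega _ X (set_of_char \o f)).
have Flarge := omega_cover_large X0 Fomega.
case: (large_cover_split_or_code cF PF Flarge) => [[F1 [F2 [F12 F1F2 F1c F2c]]]|].
  by exists F1, F2; do 2!split=> //; split; [exists F1|exists F2]; split.
move=> [e [Fe einj] [eCls eunsplit]]; subst F; case: nobase.
have einf := large_cover_indices_infinite Flarge.
exists (char_code e); split=> //; split; first exact: into_infinite_char_code.
rewrite image_fam_char_code; apply: unsplit_ultrafilter_base => //.
exact: omega_cover_indices_setI3_infinite.
Qed.

Lemma tau_split_iff :
  SplitCov (cover_class P (tau_cover X)) (cover_class P (tau_cover X)) <->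
  ~ exists f, Cls f /\ into_infinite X f /\ simple_P_point_base (image_fam X f).
Proof.
split=> [splitF [f [fCls [_ [fbase ftotal]]]]|nobase F [cF [PF Ftau]]].
  apply: (no_split_of_ultrafilter_base (f := f)) splitF => //; first by move=> G [].
  apply: (@member_cover_tau _ X (set_of_char \o f)) => // x y Xx Xy.
  by apply: ftotal; [exists x|exists y].
have Flarge := Ftau.1.
case: (large_cover_split_or_code cF PF Flarge) => [[F1 [F2 [F12 F1F2 F1c F2c]]]|].
  have tauF (G : set (set T)) : G `<=` F -> cover_class P (large_cover X) G ->
      cover_class P (tau_cover X) G.
    by move=> GF [cG [PG Glarge]]; do 2!split=> //; exact: large_cover_sub_tau GF Ftau Glarge.
  have F1F : F1 `<=` F by rewrite -F12 => U; left.
  have F2F : F2 `<=` F by rewrite -F12 => U; right.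
  by exists F1, F2; do 2!split=> //; split; [exists F1|exists F2]; split=> //; exact: tauF.
move=> [e [Fe einj] [eCls eunsplit]]; subst F; case: nobase.
have einf := large_cover_indices_infinite Flarge.
have etotal := tau_cover_indices_total einj Ftau.
exists (char_code e); split=> //; split; first exact: into_infinite_char_code.
rewrite image_fam_char_code; split.
  apply: unsplit_ultrafilter_base => // x y z Xx Xy Xz.
  by apply: subset_star_total_setI3_infinite; try exact: einf; exact: etotal.
by move=> _ _ [x Xx <-] [y Xy <-]; exact: etotal.
Qed.

End SplitCharacterization.

Theorem theorem3p5 (R : realType) (X : set R) (HX : infinite_set X) :
  (SplitCov (C_Omega X) (C_Lambda X) <->
     ~ exists f : R -> cantor_space,
         {within X, continuous f} /\ into_infinite X f /\ ultrafilter_base (image_fam X f)) /\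
  (SplitCov (B_Omega X) (B_Lambda X) <->
     ~ exists f : R -> cantor_space,
         borel_fun_on X f /\ into_infinite X f /\ ultrafilter_base (image_fam X f)) /\
  (SplitCov (C_Tau X) (C_Tau X) <->
     ~ exists f : R -> cantor_space,
         {within X, continuous f} /\ into_infinite X f /\ simple_P_point_base (image_fam X f)) /\
  (SplitCov (B_Tau X) (B_Tau X) <->
     ~ exists f : R -> cantor_space,
         borel_fun_on X f /\ into_infinite X f /\ simple_P_point_base (image_fam X f)).
Proof.
have X0 := infinite_setN0 HX.
have clopen_code := @char_code_continuous _ X.
have clopen_coord := @continuous_coord_clopen _ X.
have borel_code := @char_code_borel _ X.
have borel_coord := @borel_fun_coord_borel _ X.
split; first exact: omega_split_iff X0 clopen_code clopen_coord.
split; first exact: omega_split_iff X0 borel_code borel_coord.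
split; first exact: tau_split_iff X0 clopen_code clopen_coord.
exact: tau_split_iff X0 borel_code borel_coord.
Qed.
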